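(* Let $\mathcal{U}$ be a free ultrafilter on $\mathbb{N}$ and ${}^\ast\mathbb{R}=\mathbb{R}^{\mathbb{N}}/\mathcal{U}$. Let $\langle u_n\rangle_{n\in\mathbb{N}}$ be a sequence of real numbers and let $u=[\langle u_n\rangle]\in{}^\ast\mathbb{R}$. If $u$ is finite and $u>u_0$, where $u_0=\operatorname{st}(u)$, then the sequence $\langle u_n\rangle$ possesses a strictly decreasing subsequence.
   Context: A free ultrafilter $\mathcal{U}$ on $\mathbb{N}$ is an ultrafilter containing all cofinite subsets of $\mathbb{N}$. ${}^\ast\mathbb{R}=\mathbb{R}^{\mathbb{N}}/\mathcal{U}$ is the set of equivalence classes of real sequences, two sequences being equivalent iff they agree on a set in $\mathcal{U}$; it is an ordered field with termwise operations and order $[\langle v_n\rangle]<[\langle w_n\rangle]$ iff $\{n: v_n<w_n\}\in\mathcal{U}$, and $\mathbb{R}$ is embedded via constant sequences. An element $u\in{}^\ast\mathbb{R}$ is finite if $-r<u<r$ for some $r\in\mathbb{R}$. For finite $u$, the standard part $\operatorname{st}(u)$ is the unique real number $u_0$ nearest to $u$, i.e. such that $|u-u_0|<\varepsilon$ for every positive real $\varepsilon$. *)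

From Stdlib Require Import Reals.
Open Scope R_scope.

Definition is_filter (U : (nat -> Prop) -> Prop) : Prop :=
  U (fun _ => True) /\
  ~ U (fun _ => False) /\
  (forall A B : nat -> Prop, U A -> U B -> U (fun n => A n /\ B n)) /\
  (forall A B : nat -> Prop, (forall n, A n -> B n) -> U A -> U B).

Definition is_ultrafilter (U : (nat -> Prop) -> Prop) : Prop :=
  is_filter U /\ forall A : nat -> Prop, U A \/ U (fun n => ~ A n).

Definition cofinite (A : nat -> Prop) : Prop :=
  exists N : nat, forall n : nat, (N <= n)%nat -> A n.

Definition free_ultrafilter (U : (nat -> Prop) -> Prop) : Prop :=
  is_ultrafilter U /\ forall A, cofinite A -> U A.

(* An element of *R is represented by a real
   sequence; all notions below are the ones on equivalence classes, written
   on representatives (they are invariant under U-a.e. equality). *)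

Definition hstd (r : R) : nat -> R := fun _ => r.

Definition hlt (U : (nat -> Prop) -> Prop) (v w : nat -> R) : Prop :=
  U (fun n => v n < w n).

Definition habs (v : nat -> R) : nat -> R := fun n => Rabs (v n).
Definition hminus (v w : nat -> R) : nat -> R := fun n => v n - w n.

Definition hfinite (U : (nat -> Prop) -> Prop) (u : nat -> R) : Prop :=
  exists r : R, hlt U (hstd (- r)) u /\ hlt U u (hstd r).

Definition is_st (U : (nat -> Prop) -> Prop) (u : nat -> R) (u0 : R) : Prop :=
  forall eps : R, 0 < eps -> hlt U (habs (hminus u (hstd u0))) (hstd eps).

Definition has_strict_decr_subseq (u : nat -> R) : Prop :=
  exists phi : nat -> nat,
    (forall k, (phi k < phi (S k))%nat) /\ (forall k, u (phi (S k)) < u (phi k)).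

(* Since st(u) = u0 < u, for every eps > 0 the set of indices n with
   u0 < u n < u0 + eps belongs to U, hence is infinite. Starting from any such
   index m, the choice eps = u m - u0 yields a later index n with
   u0 < u n < u m, and iterating this step gives the strictly decreasing
   subsequence. *)
From Stdlib Require Import Reals.
From Stdlib Require Import Lra Lia Classical ClassicalEpsilon.
Open Scope R_scope.

Lemma free_ultrafilter_frequently (U : (nat -> Prop) -> Prop) (A : nat -> Prop) :
  free_ultrafilter U -> U A -> forall N, exists n, (N <= n)%nat /\ A n.
Proof.
  intros [[[_ [Hempty [Hmeet Hmono]]] _] Hcofinite] HA N.
  apply NNPP; intro Hnone; apply Hempty.
  assert (Htail : U (fun n => (N <= n)%nat)) by (apply Hcofinite; exists N; auto).
  apply (Hmono _ _ (fun n Hn => Hnone (ex_intro _ n Hn)) (Hmeet _ _ Htail HA)).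
Qed.

Lemma is_st_above_near (U : (nat -> Prop) -> Prop) (u : nat -> R) (u0 eps : R) :
  is_filter U -> is_st U u u0 -> hlt U (hstd u0) u -> 0 < eps ->
  U (fun n => u0 < u n < u0 + eps).
Proof.
  intros [_ [_ [Hmeet Hmono]]] Hst Habove Heps.
  apply (Hmono _ _) with (2 := Hmeet _ _ Habove (Hst eps Heps)).
  unfold hstd, habs, hminus; intros n [Hgt Hclose].
  apply Rabs_def2 in Hclose; lra.
Qed.

Lemma strict_decr_subseq_of_descent (u : nat -> R) (P : nat -> Prop) (m0 : nat) :
  P m0 ->
  (forall m, P m -> exists n, (m < n)%nat /\ P n /\ u n < u m) ->
  has_strict_decr_subseq u.
Proof.
  intros Hm0 Hdescent.
  assert (Htotal : forall m, exists n, P m -> (m < n)%nat /\ P n /\ u n < u m).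
  { intro m; destruct (classic (P m)) as [Hm | Hm].
    - destruct (Hdescent m Hm) as [n Hn]; exists n; auto.
    - exists m; contradiction. }
  destruct (choice _ Htotal) as [next Hnext].
  set (phi k := Nat.iter k next m0).
  assert (HP : forall k, P (phi k)) by (induction k; [exact Hm0 | apply Hnext, IHk]).
  exists phi; split; intro k; apply (Hnext _ (HP k)).
Qed.

Theorem proposition3p5 (U : (nat -> Prop) -> Prop) (u : nat -> R) (u0 : R) :
  free_ultrafilter U ->
  hfinite U u ->
  is_st U u u0 ->
  hlt U (hstd u0) u ->
  has_strict_decr_subseq u.
Proof.
  (* Finiteness of u is already implied by the existence of its standard part. *)
  intros Hfree _ Hst Habove.
  assert (Hfilter : is_filter U) by apply Hfree.
  assert (Hnear : forall eps N, 0 < eps ->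
            exists n, (N <= n)%nat /\ u0 < u n < u0 + eps).
  { intros eps N Heps.
    exact (free_ultrafilter_frequently U _ Hfree
             (is_st_above_near U u u0 eps Hfilter Hst Habove Heps) N). }
  destruct (Hnear 1 O Rlt_0_1) as [m0 [_ [Hm0 _]]].
  apply (strict_decr_subseq_of_descent u (fun m => u0 < u m) m0 Hm0).
  intros m Hm.
  destruct (Hnear (u m - u0) (S m)) as [n [Hmn [Hn Hnm]]]; [lra |].
  exists n; repeat split; [lia | lra | lra].
Qed.
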